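(* In the noisy search problem with $1/\delta=2^L$ using the $hiePM$ strategy described in the context, for every level $l<L$ the nested log-likelihood $U^{\{l\}}(t)$ is a submartingale; more precisely, for all $t>0$, $$\mathbb{E}[U^{\{l\}}(t+1)\mid\pi(t)]-U^{\{l\}}(t)\ge K_h:=\min\Big\{I\big(\tfrac13,p[\tfrac12]\big),\ \tfrac23 D\big(\tfrac13 B_1+\tfrac23 B_0\,\|\,B_0\big)\Big\},$$ where $B_1=\mathrm{Bern}(1-p[1/2])$, $B_0=\mathrm{Bern}(p[1/2])$.
   Context: Search problem: fix $\delta\in(0,1)$ with $N=1/\delta=2^L$, $L$ an integer. A target index $\theta$ is uniform on $\{1,\dots,N\}$. A noise profile $p:(0,1)\to(0,1/2)$ is continuous and non-decreasing; $p[x]:=p(x)$. At each time $t$ a query set $S_t$ is chosen from the past and one observes $Y_t=\mathbb{1}(\theta\in S_t)\oplus Z_t$ with, conditionally on $S_t$, $Z_t\sim\mathrm{Bern}(p[\delta|S_t|])$ conditionally i.i.d. across time. Posterior $\pi_i(t)=\mathbb{P}(\theta=i\mid S_1^t,Y_1^t)$, $\pi_i(0)=\delta$; $\pi_S=\sum_{i\in S}\pi_i$. $hiePM$: $H_l^m=\{m2^{L-l}+1,\dots,(m+1)2^{L-l}\}$ for $l=0,\dots,L$, $m=0,\dots,2^l-1$. At time $t$, $l^*_t$ is the largest $l$ with $\max_m\pi_{H_l^m}(t)\ge\tfrac12$, $m^*_t=\arg\max_m\pi_{H^m_{l^*_t}}(t)$, $(l_{t+1},m_{t+1})$ minimizes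 $|\pi_{H^{m'}_{l'}}(t)-\tfrac12|$ over $\{(l^*_t,m^*_t),(l^*_t+1,2m^*_t),(l^*_t+1,2m^*_t+1)\}$, and $S_{t+1}=H^{m_{t+1}}_{l_{t+1}}$. Nested log-likelihood: for $q=1,\dots,2^l$, $\mathrm{bin}(q)=\{(q-1)2^{L-l}+1,\dots,q2^{L-l}\}$, $\pi^{\{l\}}_q(t)=\sum_{i\in\mathrm{bin}(q)}\pi_i(t)$, $U^{\{l\}}(t)=\sum_{q=1}^{2^l}\pi^{\{l\}}_q(t)\log\frac{\pi^{\{l\}}_q(t)}{1-\pi^{\{l\}}_q(t)}$. $D(\cdot\|\cdot)$ is KL divergence; convex combinations of Bernoulli distributions denote mixtures; $I(q,p)$ is the mutual information between input $\mathrm{Bern}(q)$ and the output of a binary symmetric channel with crossover probability $p$. *)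

From HB Require Import structures.
From mathcomp Require Import all_boot all_order all_algebra.
From mathcomp Require Import all_classical all_reals.
From mathcomp Require Import topology normedtype exp.
Set Implicit Arguments. Unset Strict Implicit. Unset Printing Implicit Defensive.
Import Order.TTheory GRing.Theory Num.Theory.
Local Open Scope ring_scope.

Section Search.
Variable R : realType.
Variable L : nat.
(* posterior vectors: indices 0..2^L-1 stand for 1..N (N = 2^L) *)
Notation N := (2 ^ L)%N.
Notation post := ('I_N -> R).

(* H_l^m = {m 2^(L-l) + 1, ..., (m+1) 2^(L-l)} (1-based) ; 0-based membership *)
Definition inH (l m : nat) (i : 'I_N) : bool :=
  (m * 2 ^ (L - l) <= i < m.+1 * 2 ^ (L - l))%N.

Definition piH (pi : post) (l m : nat) : R := \sum_(i < N | inH l m i) pi i.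

Definition is_lstar (pi : post) (ls : nat) : Prop :=
  [/\ (ls <= L)%N,
      (exists2 m, (m < 2 ^ ls)%N & 1 / 2 <= piH pi ls m) &
      (forall l, (ls < l <= L)%N -> forall m, (m < 2 ^ l)%N -> piH pi l m < 1 / 2)].

Definition is_mstar (pi : post) (ls ms : nat) : Prop :=
  (ms < 2 ^ ls)%N /\ forall m, (m < 2 ^ ls)%N -> piH pi ls m <= piH pi ls ms.

Definition candidate (ls ms l m : nat) : Prop :=
  (l = ls /\ m = ms) \/
  [/\ (ls.+1 <= L)%N, l = ls.+1 & (m = ms.*2 \/ m = ms.*2.+1)].

(* (l,m) is a possible hiePM choice of the next query set H_l^m at posterior pi
   (any tie-breaking rule is allowed) *)
Definition hiePM_choice (pi : post) (l m : nat) : Prop :=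
  exists ls ms, [/\ is_lstar pi ls, is_mstar pi ls ms, candidate ls ms l m &
    forall l' m', candidate ls ms l' m' ->
      `|piH pi l m - 1 / 2| <= `|piH pi l' m' - 1 / 2| ].

(* crossover probability p[delta |S|] of a query S = H_l^m, |S| = 2^(L-l) *)
Definition noise (p : R -> R) (l : nat) : R :=
  p ((2 ^ (L - l))%:R / (2 ^ L)%:R).

Definition lik (p : R -> R) (l m : nat) (y : bool) (i : 'I_N) : R :=
  if inH l m i == y then 1 - noise p l else noise p l.

Definition prob_obs (p : R -> R) (pi : post) (l m : nat) (y : bool) : R :=
  \sum_(i < N) pi i * lik p l m y i.

Definition bayes (p : R -> R) (pi : post) (l m : nat) (y : bool) : post :=
  fun i => pi i * lik p l m y i / prob_obs p pi l m y.

Inductive reach (p : R -> R) : nat -> post -> Prop :=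
| reach0 : reach p 0 (fun _ => 1 / N%:R)
| reachS t pi l m y : reach p t pi -> hiePM_choice pi l m ->
    reach p t.+1 (bayes p pi l m y).

(* nested log-likelihood U^{l}: bin(q) = H_l^{q-1}, q = 1..2^l *)
Definition Unest (l : nat) (pi : post) : R :=
  \sum_(m < 2 ^ l) piH pi l m * ln (piH pi l m / (1 - piH pi l m)).

Definition expected_next (p : R -> R) (l : nat) (pi : post) (lq mq : nat) : R :=
  \sum_(y : bool) prob_obs p pi lq mq y * Unest l (bayes p pi lq mq y).

End Search.

Definition binent {R : realType} (x : R) : R :=
  - (x * ln x) - (1 - x) * ln (1 - x).

Definition mutinfo_bsc {R : realType} (q p : R) : R :=
  binent (q * (1 - p) + (1 - q) * p) - binent p.

Definition kl_bern {R : realType} (a b : R) : R :=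
  a * ln (a / b) + (1 - a) * ln ((1 - a) / (1 - b)).

(* K_h = min{ I(1/3, p[1/2]), 2/3 D(1/3 B_1 + 2/3 B_0 || B_0) },
   B_1 = Bern(1 - p[1/2]), B_0 = Bern(p[1/2]); the mixture is
   Bern(1/3 (1 - p[1/2]) + 2/3 p[1/2]). *)
Definition K_h {R : realType} (p : R -> R) : R :=
  let p2 := p (1 / 2) in
  Num.min (mutinfo_bsc (1 / 3) p2)
          (2 / 3 * kl_bern (1 / 3 * (1 - p2) + 2 / 3 * p2) p2).

From HB Require Import structures.
From mathcomp Require Import all_boot all_order all_algebra.
From mathcomp Require Import all_classical all_reals.
From mathcomp Require Import topology normedtype exp.
From mathcomp Require Import ring lra zify.
Import Order.TTheory GRing.Theory Num.Theory.
Import numFieldNormedType.Exports.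
Local Open Scope classical_set_scope.
Local Open Scope ring_scope.

(* By Bayes' rule, the expected increase of the term of a level-l bin B in
   U^{l} is pi_B * D(P(Y | theta in B) || P(Y | theta notin B)), a divergence
   between two outputs of the binary symmetric channel of the query.  hiePM
   always queries a dyadic set S with 1/3 <= pi_S <= 2/3 (only pi_S >= 1/3 at
   the finest level).  If S is coarser than level l, every bin lies inside or
   outside S, and the gains add up to at least the mutual information
   I(pi_S, p[1/2]) >= I(1/3, p[1/2]).  If S is finer, it sits in a single bin,
   whose gain alone is at least D(Bern(1/3 (1 - q) + 2/3 q) || Bern(q)) with
   q = p[1/2].  In both cases the crossover of the actual query, at most
   p[1/2] since |S| <= 1/2, can be raised to p[1/2]: a noisier BSC is a
   degradation of a less noisy one, so divergences can only shrink. *)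

Section BernoulliDivergence.
Context {R : realType}.
Implicit Types a b t u v x : R.

Lemma ln_ge_1_subV {x} : 0 < x -> 1 - x^-1 <= ln x.
Proof.
move=> x0; have xV0 : 0 < x^-1 by rewrite invr_gt0.
have /le_ln1Dx : -1 < x^-1 - 1 by lra.
by rewrite addrC subrK lnV ?posrE //; lra.
Qed.

Lemma log_sum_le u1 u2 v1 v2 : 0 < u1 -> 0 < u2 -> 0 < v1 -> 0 < v2 ->
  (u1 + u2) * ln ((u1 + u2) / (v1 + v2)) <= u1 * ln (u1 / v1) + u2 * ln (u2 / v2).
Proof.
move=> u10 u20 v10 v20; set U := u1 + u2; set V := v1 + v2.
have U0 : 0 < U by rewrite addr_gt0.
have V0 : 0 < V by rewrite addr_gt0.
have termwise u v : 0 < u -> 0 < v -> u - v * U / V <= u * ln (u / v) - u * ln (U / V).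
  move=> u0 v0; have z0 : 0 < (u / v) / (U / V) by rewrite !divr_gt0.
  have := ln_ge_1_subV z0; rewrite ln_div ?posrE ?divr_gt0 // -mulrBr => le_z.
  have -> : u - v * U / V = u * (1 - ((u / v) / (U / V))^-1) by field; rewrite !gt_eqF.
  by rewrite ler_pM2l.
have := termwise _ _ u10 v10; have := termwise _ _ u20 v20.
have : u1 - v1 * U / V + (u2 - v2 * U / V) = 0 by rewrite /U /V; field; rewrite gt_eqF.
have : U * ln (U / V) = u1 * ln (U / V) + u2 * ln (U / V) by rewrite /U mulrDl.
lra.
Qed.

Lemma kl_bern_ge0 {a b} : 0 < a < 1 -> 0 < b < 1 -> 0 <= kl_bern a b.
Proof.
move=> /andP[a0 a1] /andP[b0 b1].
have := log_sum_le a (1 - a) b (1 - b); rewrite !subr_gt0 => /(_ a0 a1 b0 b1).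
have one (c : R) : c + (1 - c) = 1 by ring.
by rewrite !one divr1 ln1 mulr0.
Qed.

Lemma kl_bern_xx a : 0 < a < 1 -> kl_bern a a = 0.
Proof. by move=> /andP[a0 a1]; rewrite /kl_bern !divff ?ln1 ?mulr0 ?addr0 //; lra. Qed.

Lemma kl_bern_1sub a b : kl_bern (1 - a) (1 - b) = kl_bern a b.
Proof.
have sub_sub (c : R) : 1 - (1 - c) = c by ring.
by rewrite /kl_bern !sub_sub addrC.
Qed.

Lemma kl_bern_convex {t a1 a2 b1 b2} : 0 <= t <= 1 ->
  0 < a1 < 1 -> 0 < a2 < 1 -> 0 < b1 < 1 -> 0 < b2 < 1 ->
  kl_bern (t * a1 + (1 - t) * a2) (t * b1 + (1 - t) * b2)
  <= t * kl_bern a1 b1 + (1 - t) * kl_bern a2 b2.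
Proof.
move=> /andP[t0 t1] /andP[a10 a11] /andP[a20 a21] /andP[b10 b11] /andP[b20 b21].
have [->|tn0] := eqVneq t 0; first by rewrite !mul0r !subr0 !mul1r !add0r.
have [->|tn1] := eqVneq t 1; first by rewrite !mul1r !subrr !mul0r !addr0.
have tp : 0 < t by rewrite lt_neqAle eq_sym tn0.
have t1' : t < 1 by rewrite lt_neqAle tn1.
have tq : 0 < 1 - t by rewrite subr_gt0.
have cancel_t (c d : R) : 0 < c -> 0 < d -> (t * c) / (t * d) = c / d.
  by move=> c0 d0; field; rewrite !gt_eqF.
have cancel_1t (c d : R) : 0 < c -> 0 < d -> ((1 - t) * c) / ((1 - t) * d) = c / d.
  by move=> c0 d0; field; rewrite !gt_eqF.
have h1 := log_sum_le (t * a1) ((1 - t) * a2) (t * b1) ((1 - t) * b2).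
have h2 := log_sum_le (t * (1 - a1)) ((1 - t) * (1 - a2))
                      (t * (1 - b1)) ((1 - t) * (1 - b2)).
rewrite !cancel_t ?cancel_1t ?subr_gt0 // in h1 h2.
rewrite ?mulr_gt0 ?subr_gt0 // in h1 h2.
rewrite /kl_bern.
have -> : 1 - (t * a1 + (1 - t) * a2) = t * (1 - a1) + (1 - t) * (1 - a2) by ring.
have -> : 1 - (t * b1 + (1 - t) * b2) = t * (1 - b1) + (1 - t) * (1 - b2) by ring.
move: (h1 isT isT isT isT) (h2 isT isT isT isT); lra.
Qed.

Lemma between_conv x y z : x <= y <= z \/ z <= y <= x ->
  exists2 t, 0 <= t <= 1 & y = t * z + (1 - t) * x.
Proof.
have [-> h|nzx h] := eqVneq z x.
  exists 0; first by rewrite lexx ler01.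
  by rewrite mul0r add0r subr0 mul1r; apply/eqP; rewrite eq_le; case: h => /andP[-> ->].
exists ((y - x) / (z - x)); last by field; rewrite subr_eq0.
case: h => /andP[h1 h2].
  have zx : 0 < z - x by rewrite subr_gt0 lt_neqAle eq_sym nzx (le_trans h1 h2).
  by rewrite divr_ge0 ?ler_pdivrMr ?mul1r /=; lra.
have zx : z - x < 0 by rewrite subr_lt0 lt_neqAle nzx (le_trans h1 h2).
rewrite -mulrNN -invrN; have zx' : 0 < - (z - x) by rewrite oppr_gt0.
by rewrite divr_ge0 ?ler_pdivrMr ?mul1r /=; lra.
Qed.

Lemma kl_bern_farther_r a b b' : 0 < a < 1 -> 0 < b' < 1 ->
  a <= b <= b' \/ b' <= b <= a -> kl_bern a b <= kl_bern a b'.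
Proof.
move=> ha hb' /between_conv[t t01 ->].
have := kl_bern_convex t01 ha ha hb' ha.
have -> : t * a + (1 - t) * a = a by ring.
rewrite kl_bern_xx // mulr0 addr0 => /le_trans; apply.
have := kl_bern_ge0 ha hb'; case/andP: t01 => ? ?; nra.
Qed.

Lemma kl_bern_farther_l a a' b : 0 < a' < 1 -> 0 < b < 1 ->
  b <= a <= a' \/ a' <= a <= b -> kl_bern a b <= kl_bern a' b.
Proof.
move=> ha' hb /between_conv[t t01 ->].
have := kl_bern_convex t01 ha' hb hb hb.
have -> : t * b + (1 - t) * b = b by ring.
rewrite kl_bern_xx // mulr0 addr0 => /le_trans; apply.
have := kl_bern_ge0 ha' hb; case/andP: t01 => ? ?; nra.
Qed.

End BernoulliDivergence.

Section BinarySymmetricChannel.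
Context {R : realType}.
Implicit Types a b f g q s t x : R.

Definition bsc_out q f : R := f * (1 - q) + (1 - f) * q.

Lemma bsc_out0 q : bsc_out q 0 = q.
Proof. by rewrite /bsc_out; ring. Qed.

Lemma bsc_out1 q : bsc_out q 1 = 1 - q.
Proof. by rewrite /bsc_out; ring. Qed.

Lemma bsc_out_in01 {q f} : 0 < q < 1 / 2 -> 0 <= f <= 1 -> 0 < bsc_out q f < 1.
Proof.
move=> /andP[q0 q1] /andP[f0 f1].
have -> : bsc_out q f = q + f * (1 - 2 * q) by rewrite /bsc_out; ring.
have : 0 <= f * (1 - 2 * q) <= 1 - 2 * q by rewrite mulr_ge0 ?ler_piMl //=; lra.
by move=> /andP[? ?]; apply/andP; split; lra.
Qed.

Lemma bsc_out_homo q f g : q < 1 / 2 -> f <= g -> bsc_out q f <= bsc_out q g.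
Proof.
move=> q1 fg; rewrite -subr_ge0.
have -> : bsc_out q g - bsc_out q f = (g - f) * (1 - 2 * q) by rewrite /bsc_out; ring.
by rewrite mulr_ge0 // subr_ge0 //; lra.
Qed.

(* A BSC with crossover q is the BSC with crossover q' followed by one with
   crossover (q - q') / (1 - 2 q'). *)
Lemma kl_bsc_data_processing {q' q a b} : 0 < q' -> q' <= q -> q < 1 / 2 ->
  0 <= a <= 1 -> 0 <= b <= 1 ->
  kl_bern (bsc_out q a) (bsc_out q b) <= kl_bern (bsc_out q' a) (bsc_out q' b).
Proof.
move=> q'0 q'q q1 a01 b01.
have hq' : 0 < q' < 1 / 2 by apply/andP; split => //; lra.
have ha := bsc_out_in01 hq' a01; have hb := bsc_out_in01 hq' b01.
have ha' : 0 < 1 - bsc_out q' a < 1 by case/andP: ha => ? ?; apply/andP; split; lra.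
have hb' : 0 < 1 - bsc_out q' b < 1 by case/andP: hb => ? ?; apply/andP; split; lra.
have d0 : 0 < 1 - 2 * q' by lra.
set t := 1 - (q - q') / (1 - 2 * q').
have t01 : 0 <= t <= 1.
  have : 0 <= (q - q') / (1 - 2 * q') <= 1 by rewrite divr_ge0 ?ler_pdivrMr /=; lra.
  by rewrite /t; case/andP=> ? ?; apply/andP; split; lra.
have compose f : bsc_out q f = t * bsc_out q' f + (1 - t) * (1 - bsc_out q' f).
  by rewrite /t /bsc_out; field; rewrite gt_eqF.
have := kl_bern_convex t01 ha ha' hb hb'.
by rewrite -!compose kl_bern_1sub -mulrDl subrKC mul1r.
Qed.

Lemma binent_1sub x : binent (1 - x) = binent x.
Proof. by rewrite /binent (_ : 1 - (1 - x) = x); ring. Qed.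

Lemma conv_in01 {t a b} : 0 <= t <= 1 -> 0 < a < 1 -> 0 < b < 1 ->
  0 < t * a + (1 - t) * b < 1.
Proof.
move=> /andP[t0 t1] /andP[a0 a1] /andP[b0 b1].
by apply/andP; split; case: (lerP a b) => ?; nra.
Qed.

Lemma binent_mix_gap {a b t} : 0 < a < 1 -> 0 < b < 1 -> 0 <= t <= 1 ->
  binent (t * a + (1 - t) * b) - t * binent a - (1 - t) * binent b =
  t * kl_bern a (t * a + (1 - t) * b) + (1 - t) * kl_bern b (t * a + (1 - t) * b).
Proof.
move=> ha hb ht; have /andP[m0 m1] := conv_in01 ht ha hb.
move: ha hb => /andP[a0 a1] /andP[b0 b1].
rewrite /kl_bern /binent !ln_div ?posrE ?subr_gt0 //.
move: (ln (t * a + (1 - t) * b)) (ln (1 - (t * a + (1 - t) * b))) => X Y; ring.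
Qed.

Lemma binent_concave {a b t} : 0 < a < 1 -> 0 < b < 1 -> 0 <= t <= 1 ->
  t * binent a + (1 - t) * binent b <= binent (t * a + (1 - t) * b).
Proof.
move=> ha hb ht; have hm := conv_in01 ht ha hb.
have := binent_mix_gap ha hb ht.
have := kl_bern_ge0 ha hm; have := kl_bern_ge0 hb hm; case/andP: ht => ? ?; nra.
Qed.

Lemma mutinfo_bsc_avg_kl s q : 0 < q < 1 / 2 -> 0 <= s <= 1 ->
  mutinfo_bsc s q =
  s * kl_bern (1 - q) (bsc_out q s) + (1 - s) * kl_bern q (bsc_out q s).
Proof.
move=> /andP[q0 q1] s01.
have hq : 0 < q < 1 by apply/andP; split; lra.
have h1q : 0 < 1 - q < 1 by apply/andP; split; lra.
have -> : bsc_out q s = s * (1 - q) + (1 - s) * q by [].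
rewrite -(binent_mix_gap h1q hq s01) binent_1sub /mutinfo_bsc; ring.
Qed.

Lemma mutinfo_bsc_ge_third {s q} : 0 < q < 1 / 2 -> 1 / 3 <= s <= 2 / 3 ->
  mutinfo_bsc (1 / 3) q <= mutinfo_bsc s q.
Proof.
move=> hq /andP[s1 s2]; rewrite /mutinfo_bsc lerD2r.
have h3 : 0 < bsc_out q (1 / 3) < 1 by apply: bsc_out_in01 => //; apply/andP; split; lra.
have h3' : 0 < 1 - bsc_out q (1 / 3) < 1 by case/andP: h3 => ? ?; apply/andP; split; lra.
have t01 : 0 <= 2 - 3 * s <= 1 by apply/andP; split; lra.
have := binent_concave h3 h3' t01; rewrite binent_1sub.
have -> : (2 - 3 * s) * bsc_out q (1 / 3) + (1 - (2 - 3 * s)) * (1 - bsc_out q (1 / 3))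
          = s * (1 - q) + (1 - s) * q by rewrite /bsc_out; field.
lra.
Qed.

End BinarySymmetricChannel.

Section DyadicBins.
Context {R : realType} {L : nat}.
Local Notation N := (2 ^ L)%N.
Implicit Types pi : 'I_N -> R.

Lemma inH_div l m (i : 'I_N) : inH l m i = (i %/ 2 ^ (L - l) == m)%N.
Proof.
have d0 : (0 < 2 ^ (L - l))%N by rewrite expn_gt0.
by rewrite /inH eqn_leq leq_divRL // -[(_ %/ _ <= m)%N]ltnS ltn_divLR // andbC.
Qed.

Lemma inH_coarsen {l' l m} n {i : 'I_N} : (l' <= l <= L)%N -> inH l m i ->
  inH l' n i = (m %/ 2 ^ (l - l') == n)%N.
Proof.
move=> /andP[l'l lL]; rewrite !inH_div => /eqP <-.
by rewrite -divnMA -expnD; congr (_ %/ 2 ^ _ == _)%N; lia.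
Qed.

Lemma div_bin_lt {l} (i : 'I_N) : (l <= L)%N -> (i %/ 2 ^ (L - l) < 2 ^ l)%N.
Proof. by move=> lL; rewrite ltn_divLR ?expn_gt0 // -expnD subnKC. Qed.

Lemma sum_over_bins l (P : pred 'I_N) (F : 'I_N -> R) : (l <= L)%N ->
  \sum_(m < 2 ^ l) \sum_(i | inH l m i && P i) F i = \sum_(i | P i) F i.
Proof.
move=> lL; under eq_bigr do rewrite big_mkcond /=.
rewrite exchange_big [RHS]big_mkcond; apply: eq_bigr => i _ /=.
rewrite (bigD1 (Ordinal (div_bin_lt i lL))) //= inH_div eqxx big1 ?addr0 //.
by move=> m neq; rewrite inH_div; case: eqP => // h; case/eqP: neq; apply: val_inj.
Qed.

Lemma piH_split pi l m : (l < L)%N ->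
  piH pi l m = piH pi l.+1 m.*2 + piH pi l.+1 m.*2.+1.
Proof.
move=> lL; rewrite /piH (bigID (inH l.+1 m.*2)) /=.
have half (i : 'I_N) : (i %/ 2 ^ (L - l) = i %/ 2 ^ (L - l.+1) %/ 2)%N.
  by rewrite -divnMA -expnSr; congr (_ %/ 2 ^ _)%N; lia.
congr (_ + _); apply: eq_bigl => i; rewrite !inH_div half.
  by apply/idP/idP => [/andP[_ ->] // | /eqP ->]; rewrite eqxx andbT; apply/eqP; lia.
apply/idP/idP => [/andP[/eqP h1 /eqP h2] | /eqP h]; first by apply/eqP; lia.
by apply/andP; split; apply/eqP; lia.
Qed.

Lemma piH_root pi : piH pi 0 0 = \sum_i pi i.
Proof. by apply: eq_bigl => i; rewrite inH_div subn0 divn_small. Qed.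

Lemma bin_witness {l m} : (l <= L)%N -> (m < 2 ^ l)%N -> exists i : 'I_N, inH l m i.
Proof.
move=> lL ml; have lt : (m * 2 ^ (L - l) < N)%N.
  by rewrite -{2}(subnKC lL) expnD ltn_pmul2r ?expn_gt0.
by exists (Ordinal lt); rewrite inH_div /= mulnK ?expn_gt0.
Qed.

Lemma outside_bin_witness {l m} : (1 <= l <= L)%N -> exists i : 'I_N, ~~ inH l m i.
Proof.
move=> /andP[l1 lL]; have [->|m0] := eqVneq m 0%N.
  have lt : (2 ^ (L - l) < N)%N by rewrite ltn_exp2l //; lia.
  by exists (Ordinal lt); rewrite inH_div /= divnn expn_gt0.
by exists (Ordinal (expn_gt0 2 L)); rewrite inH_div /= div0n eq_sym.
Qed.

End DyadicBins.

Lemma closest_to_half_bounds {R : realType} {x c1 c2 v : R} :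
  1 / 2 <= x -> x = c1 + c2 -> c1 < 1 / 2 -> c2 < 1 / 2 ->
  v = x \/ v = c1 \/ v = c2 ->
  `|v - 1 / 2| <= `|x - 1 / 2| -> `|v - 1 / 2| <= `|c1 - 1 / 2| ->
  `|v - 1 / 2| <= `|c2 - 1 / 2| -> 1 / 3 <= v <= 2 / 3.
Proof.
move=> hx sum_c c1l c2l hv.
have nx : `|x - 1 / 2| = x - 1 / 2 by rewrite ger0_norm // subr_ge0.
have n1 : `|c1 - 1 / 2| = 1 / 2 - c1 by rewrite ltr0_norm ?opprB // subr_lt0.
have n2 : `|c2 - 1 / 2| = 1 / 2 - c2 by rewrite ltr0_norm ?opprB // subr_lt0.
by case: hv => [|[|]] ->; rewrite nx n1 n2 => *; apply/andP; split; lra.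
Qed.

Section HiePM.
Context {R : realType} {L : nat} (p : R -> R).
Local Notation N := (2 ^ L)%N.
Hypothesis p_range : forall x : R, 0 < x < 1 -> 0 < p x < 1 / 2.
Hypothesis p_homo : forall x y : R, 0 < x -> x <= y -> y < 1 -> p x <= p y.

Definition posterior (pi : 'I_N -> R) : Prop := (forall i, 0 < pi i) /\ \sum_i pi i = 1.

Lemma noise_bounds {lq} : (1 <= lq <= L)%N ->
  0 < noise L p lq < 1 / 2 /\ noise L p lq <= p (1 / 2).
Proof.
move=> /andP[lq1 lqL]; rewrite /noise.
set x : R := (2 ^ (L - lq))%:R / N%:R.
have x0 : 0 < x by rewrite divr_gt0 // ltr0n expn_gt0.
have x_half : x <= 1 / 2.
  have : (2 ^ (L - lq) * 2 <= N)%N by rewrite -expnSr leq_pexp2l //; lia.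
  by rewrite -(ler_nat R) natrM ler_pdivrMr ?ltr0n ?expn_gt0 //; lra.
by split; [apply: p_range | apply: p_homo]; rewrite ?x0 //=; lra.
Qed.

Lemma hiePM_query_balanced { pi lq mq } : (1 <= L)%N -> posterior pi -> hiePM_choice pi lq mq ->
  [/\ (1 <= lq <= L)%N, (mq < 2 ^ lq)%N, 1 / 3 <= piH pi lq mq &
      ((lq < L)%N -> piH pi lq mq <= 2 / 3)].
Proof.
move=> L1 [_ total] [ls [ms [[lsL [m0 m0l m0_half] finer] [msl msmax] hc hmin]]].
have ms_half : 1 / 2 <= piH pi ls ms := le_trans m0_half (msmax _ m0l).
have [lsL'|Lls] := ltnP ls L; last first.
  have lsE : ls = L by apply/eqP; rewrite eqn_leq lsL Lls.
  rewrite lsE in hc msl ms_half.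
  case: hc => [[-> ->]|[]]; last by rewrite ltnn.
  by rewrite L1 leqnn ltnn; split => //; lra.
have ms2l : (ms.*2 < 2 ^ ls.+1)%N by rewrite expnS; lia.
have ms21l : (ms.*2.+1 < 2 ^ ls.+1)%N by rewrite expnS; lia.
have cand0 : candidate L ls ms ls ms by left.
have cand1 : candidate L ls ms ls.+1 ms.*2 by right; split => //; left.
have cand2 : candidate L ls ms ls.+1 ms.*2.+1 by right; split => //; right.
have /andP[v13 v23] : 1 / 3 <= piH pi lq mq <= 2 / 3.
  apply: (closest_to_half_bounds ms_half (piH_split pi ls ms lsL'));
    rewrite ?finer ?hmin ?lsL' ?ltnSn //.
  by case: hc => [[-> ->]|[_ -> [->|->]]]; auto.
move: v13 v23; case: hc => [[-> ->]|[_ -> [->|->]]] v13 v23; last 2 first.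
- by split => //; lia.
- by split => //; lia.
split => //.
rewrite lsL andbT lt0n; apply/eqP => ls0; move: msl v23; rewrite ls0 expn0 ltnS leqn0.
by move/eqP->; rewrite piH_root total; lra.
Qed.

Lemma reach_posterior {t pi} : (1 <= L)%N -> reach p t pi -> posterior pi.
Proof.
move=> L1; elim => {t pi} [|t pi lq mq y _ [pi_pos total] hq].
  have N0 : (0 < N%:R :> R) by rewrite ltr0n expn_gt0.
  split=> [i|]; first by rewrite divr_gt0.
  rewrite sumr_const card_ord -[_ *+ N]mulr_natr.
  by rewrite mul1r mulVf // gt_eqF.
have [lq_range _ _ _] := hiePM_query_balanced L1 (conj pi_pos total) hq.
have [/andP[q0 q1] _] := noise_bounds lq_range.
have lik_pos (i : 'I_N) : 0 < lik p lq mq y i by rewrite /lik; case: ifP => _; lra.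
have obs_pos : 0 < prob_obs p pi lq mq y.
  rewrite /prob_obs (bigD1 (Ordinal (expn_gt0 2 L))) //=.
  by rewrite ltr_pwDl ?mulr_gt0 ?sumr_ge0 // => i _; rewrite ltW ?mulr_gt0.
split=> [i|]; first by rewrite /bayes divr_gt0 ?mulr_gt0.
by rewrite /bayes -mulr_suml divff // gt_eqF.
Qed.

End HiePM.

Section BinGain.
Context {R : realType}.
Implicit Types a b c d q x w U V : R.

(* Probability of observing [y] jointly with the target lying in a set of
   mass [a + b], of which [a] is inside the query. *)
Definition out_mass q a b (y : bool) : R :=
  if y then a * (1 - q) + b * q else a * q + b * (1 - q).

(* Expected gain of the term of a bin of mass [a + b] ([a] inside the query),
   whose complement has mass [c + d] ([c] inside the query). *)
Definition gain q a b c d : R :=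
  (a + b) * kl_bern (bsc_out q (a / (a + b))) (bsc_out q (c / (c + d))).

Lemma frac_in01 {a b} : 0 <= a -> 0 <= b -> 0 < a + b -> 0 <= a / (a + b) <= 1.
Proof.
move=> a0 b0 ab0; apply/andP; split; first exact: divr_ge0 (ltW ab0).
by rewrite ler_pdivrMr // mul1r lerDl.
Qed.

Lemma out_mass_bsc q a b y : 0 < a + b -> out_mass q a b y =
  (a + b) * (if y then bsc_out q (a / (a + b)) else 1 - bsc_out q (a / (a + b))).
Proof. by move=> ab0; case: y; rewrite /out_mass /bsc_out; field; rewrite gt_eqF. Qed.

Lemma out_mass_gt0 {q a b} y : 0 < q < 1 / 2 -> 0 <= a -> 0 <= b -> 0 < a + b ->
  0 < out_mass q a b y.
Proof.
move=> hq a0 b0 ab0; rewrite out_mass_bsc //.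
have /andP[? ?] := bsc_out_in01 hq (frac_in01 a0 b0 ab0).
by rewrite mulr_gt0 //; case: y; lra.
Qed.

Lemma mul_logit_frac U V : 0 < U -> 0 < V ->
  (U + V) * (U / (U + V) * ln (U / (U + V) / (1 - U / (U + V)))) = U * ln (U / V).
Proof.
move=> U0 V0; have UV0 : U + V != 0 by rewrite gt_eqF // addr_gt0.
have -> : U / (U + V) / (1 - U / (U + V)) = U / V by field; rewrite UV0 gt_eqF.
by rewrite mulrA; congr (_ * _); field.
Qed.

Lemma kl_bern_chain x w a b : 0 < x -> 0 < w -> 0 < a < 1 -> 0 < b < 1 ->
  x * a * ln (x * a / (w * b)) + x * (1 - a) * ln (x * (1 - a) / (w * (1 - b)))
  - x * ln (x / w) = x * kl_bern a b.
Proof.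
move=> x0 w0 /andP[a0 a1] /andP[b0 b1].
have a1' : 0 < 1 - a by lra.
have b1' : 0 < 1 - b by lra.
by rewrite /kl_bern !ln_div ?posrE ?mulr_gt0 // !lnM ?posrE //; ring.
Qed.

Lemma gain_eq_log_ratio q a b c d : 0 < q < 1 / 2 ->
  0 <= a -> 0 <= b -> 0 <= c -> 0 <= d -> 0 < a + b -> 0 < c + d ->
  out_mass q a b true * ln (out_mass q a b true / out_mass q c d true) +
  out_mass q a b false * ln (out_mass q a b false / out_mass q c d false)
  - (a + b) * ln ((a + b) / (c + d)) = gain q a b c d.
Proof.
move=> hq a0 b0 c0 d0 ab0 cd0.
have hab := bsc_out_in01 hq (frac_in01 a0 b0 ab0).
have hcd := bsc_out_in01 hq (frac_in01 c0 d0 cd0).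
by rewrite !out_mass_bsc //= kl_bern_chain.
Qed.

Lemma gain_ge0 q a b c d : 0 < q < 1 / 2 ->
  0 <= a -> 0 <= b -> 0 <= c -> 0 <= d -> 0 < a + b -> 0 < c + d ->
  0 <= gain q a b c d.
Proof.
move=> hq a0 b0 c0 d0 ab0 cd0; apply: mulr_ge0; first exact: ltW.
by apply: kl_bern_ge0; apply: bsc_out_in01 hq _; exact: frac_in01.
Qed.

Lemma gain_ge_aligned (q' : R) q a b c d : 0 < q' -> q' <= q -> q < 1 / 2 ->
  0 <= a -> 0 <= b -> 0 <= c -> 0 <= d -> 0 < a + b -> 0 < c + d ->
  a + b + c + d = 1 -> a = 0 \/ b = 0 ->
  a * kl_bern (1 - q) (bsc_out q (a + c)) + b * kl_bern q (bsc_out q (a + c))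
  <= gain q' a b c d.
Proof.
move=> q'0 q'q q1 a0 b0 c0 d0 ab0 cd0 total aligned.
have hq : 0 < q < 1 / 2 by apply/andP; split; lra.
have c_frac := frac_in01 c0 d0 cd0.
have in01 f : 0 <= f <= 1 -> 0 < bsc_out q f < 1 by exact: bsc_out_in01.
have unit01 : 0 <= (1 : R) <= 1 by apply/andP; split; lra.
have zero01 : 0 <= (0 : R) <= 1 by apply/andP; split; lra.
have ac01 : 0 <= a + c <= 1 by apply/andP; split; lra.
rewrite /gain; case: aligned => [a00|b00]; subst.
  rewrite mul0r !add0r mul0r ler_wpM2l //.
  apply: le_trans (kl_bsc_data_processing q'0 q'q q1 zero01 c_frac).
  rewrite -{1}(bsc_out0 q); apply: kl_bern_farther_r; rewrite ?in01 //; left.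
  rewrite !bsc_out_homo // ler_pdivlMr //; nra.
have a_pos : 0 < a by lra.
rewrite mul0r !addr0 divff ?gt_eqF // ler_wpM2l //.
apply: le_trans (kl_bsc_data_processing q'0 q'q q1 unit01 c_frac).
rewrite -(bsc_out1 q); apply: kl_bern_farther_r; rewrite ?in01 //; right.
rewrite !bsc_out_homo // ?ler_pdivrMr //; nra.
Qed.

Lemma gain_ge_inside {q' q a b d : R} : 0 < q' -> q' <= q -> q < 1 / 2 ->
  0 < a -> 0 <= b -> 0 < d -> a + b + d = 1 ->
  kl_bern (bsc_out q a) q <= gain q' a b 0 d.
Proof.
move=> q'0 q'q q1 a0 b0 d0 total.
have hq : 0 < q < 1 / 2 by apply/andP; split; lra.
have ab0 : 0 < a + b by lra.
have a_frac := frac_in01 (ltW a0) b0 ab0.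
have zero01 : 0 <= (0 : R) <= 1 by apply/andP; split; lra.
have ab01 : 0 <= a + b <= 1 by apply/andP; split; lra.
have ha := bsc_out_in01 hq a_frac; have h0 := bsc_out_in01 hq zero01.
apply: (@le_trans _ _ ((a + b) * kl_bern (bsc_out q (a / (a + b))) (bsc_out q 0))).
  have := kl_bern_convex ab01 ha h0 h0 h0.
  rewrite kl_bern_xx // mulr0 addr0 -mulrDl subrKC mul1r bsc_out0.
  rewrite (_ : (a + b) * bsc_out q (a / (a + b)) + (1 - (a + b)) * q = bsc_out q a) //.
  by rewrite /bsc_out; field; rewrite gt_eqF.
rewrite /gain mul0r; apply: ler_wpM2l; [exact: ltW | exact: kl_bsc_data_processing].
Qed.

End BinGain.

Section Drift.
Context {R : realType} {L : nat} (p : R -> R) (pi : 'I_(2 ^ L) -> R) (l lq mq : nat).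
Local Notation N := (2 ^ L)%N.
Hypothesis pi_post : posterior pi.
Hypothesis l_range : (1 <= l <= L)%N.
Let lL : (l <= L)%N. Proof. by case/andP: l_range. Qed.
Local Notation inS := (inH lq mq).
Local Notation q := (noise L p lq).

Definition cell (A B : pred 'I_N) : R := \sum_(i | A i && B i) pi i.

Local Notation gain_at m := (gain q (cell (inH l m) inS) (cell (inH l m) (predC inS))
  (cell (predC (inH l m)) inS) (cell (predC (inH l m)) (predC inS))).

Lemma cell_ge0 A B : 0 <= cell A B.
Proof. by apply: sumr_ge0 => i _; apply: ltW; case: pi_post. Qed.

Lemma mass_gt0 {A : pred 'I_N} i : A i -> 0 < \sum_(j | A j) pi j.
Proof.
move=> Ai; case: pi_post => pi_pos _; rewrite (bigD1 i) //= ltr_pwDl //.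
by rewrite sumr_ge0 // => j _; apply: ltW.
Qed.

Lemma sum_cells (A : pred 'I_N) : \sum_(i | A i) pi i = cell A inS + cell A (predC inS).
Proof. exact: bigID. Qed.

Lemma cells_bin_gt0 (m : 'I_(2 ^ l)) : 0 < cell (inH l m) inS + cell (inH l m) (predC inS).
Proof.
have [i im] := bin_witness lL (ltn_ord m).
by rewrite -sum_cells; apply: (mass_gt0 i).
Qed.


Lemma cells_outside_gt0 m :
  0 < cell (predC (inH l m)) inS + cell (predC (inH l m)) (predC inS).
Proof.
have [i im] := outside_bin_witness (m := m) l_range.
by rewrite -sum_cells; apply: (mass_gt0 i).
Qed.

Lemma cells_total m : cell (inH l m) inS + cell (inH l m) (predC inS) +
  cell (predC (inH l m)) inS + cell (predC (inH l m)) (predC inS) = 1.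
Proof. by case: pi_post => _ <-; rewrite [RHS](bigID (inH l m)) /= !sum_cells addrA. Qed.

Lemma sum_lik (A : pred 'I_N) y :
  \sum_(i | A i) pi i * lik p lq mq y i = out_mass q (cell A inS) (cell A (predC inS)) y.
Proof.
rewrite (bigID inS) /= /out_mass /cell !mulr_suml.
by case: y; congr (_ + _); apply: eq_bigr => i /andP[_ hi]; rewrite /lik ?hi ?(negbTE hi).
Qed.

Lemma drift_eq_sum_gain : 0 < q < 1 / 2 ->
  expected_next p l pi lq mq - Unest l pi = \sum_(m < 2 ^ l) gain_at m.
Proof.
move=> hq; rewrite /expected_next /Unest big_bool /= !mulr_sumr -big_split -sumrB /=.
apply: eq_bigr => m _.
have ab0 := cells_bin_gt0 m; have cd0 := cells_outside_gt0 m; have total := cells_total m.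
move: ab0 cd0 total; set a := cell _ inS; set b := cell _ (predC inS).
set c := cell _ inS; set d := cell _ (predC inS) => ab0 cd0 total.
have obs y : prob_obs p pi lq mq y = out_mass q a b y + out_mass q c d y.
  by rewrite /prob_obs (bigID (inH l m)) !sum_lik.
have post y : piH (bayes p pi lq mq y) l m = out_mass q a b y / prob_obs p pi lq mq y.
  by rewrite /piH /bayes -mulr_suml sum_lik.
rewrite !post !obs !mul_logit_frac ?(out_mass_gt0 _ hq) ?cell_ge0 //.
rewrite /piH sum_cells (_ : 1 - (a + b) = c + d).
  by rewrite gain_eq_log_ratio ?cell_ge0.
by rewrite -total; ring.
Qed.

Lemma cells_aligned m : (lq <= l)%N ->
  cell (inH l m) inS = 0 \/ cell (inH l m) (predC inS) = 0.
Proof.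
move=> lql; have lqlL : (lq <= l <= L)%N by rewrite lql lL.
have [in_S|out_S] := boolP (m %/ 2 ^ (l - lq) == mq)%N; [right|left];
  apply: big_pred0 => i /=; case im: (inH l m i) => //=;
  by rewrite (inH_coarsen _ lqlL im) ?in_S ?(negbTE out_S).
Qed.

Lemma sum_gain_coarse_ge q0 : (lq <= l)%N -> 0 < q -> q <= q0 -> q0 < 1 / 2 ->
  1 / 3 <= piH pi lq mq <= 2 / 3 ->
  mutinfo_bsc (1 / 3) q0 <= \sum_(m < 2 ^ l) gain_at m.
Proof.
move=> lql q_pos qq0 q01 s_range; set s := piH pi lq mq in s_range *.
have hq0 : 0 < q0 < 1 / 2 by apply/andP; split; lra.
have s01 : 0 <= s <= 1 by case/andP: s_range => ? ?; apply/andP; split; lra.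
have bins_in_S : \sum_(m < 2 ^ l) cell (inH l m) inS = s by exact: sum_over_bins.
have bins_out_S : \sum_(m < 2 ^ l) cell (inH l m) (predC inS) = 1 - s.
  rewrite sum_over_bins //; case: pi_post => _ <-.
  by rewrite [in RHS](bigID inS) addrAC subrr add0r.
have split_s m : cell (inH l m) inS + cell (predC (inH l m)) inS = s.
  by rewrite /s /piH (bigID (inH l m)) /=; congr (_ + _); apply: eq_bigl => i; rewrite andbC.
apply: le_trans (mutinfo_bsc_ge_third hq0 s_range) _.
rewrite mutinfo_bsc_avg_kl // -{1}bins_in_S -bins_out_S !mulr_suml -big_split /=.
apply: ler_sum => m _; rewrite -(split_s m).
apply: gain_ge_aligned; rewrite ?cell_ge0 ?cells_bin_gt0 ?cells_outside_gt0 ?cells_total //.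
exact: cells_aligned.
Qed.

Lemma sum_gain_fine_ge q0 : (l < lq <= L)%N -> (mq < 2 ^ lq)%N ->
  0 < q -> q <= q0 -> q0 < 1 / 2 -> 1 / 3 <= piH pi lq mq ->
  kl_bern (bsc_out q0 (1 / 3)) q0 <= \sum_(m < 2 ^ l) gain_at m.
Proof.
move=> /andP[llq lqL] mql q_pos qq0 q01 s13.
have hq0 : 0 < q0 < 1 / 2 by apply/andP; split; lra.
have hq : 0 < q < 1 / 2 by apply/andP; split; lra.
have k0l : (mq %/ 2 ^ (lq - l) < 2 ^ l)%N.
  by rewrite ltn_divLR ?expn_gt0 // -expnD subnKC // ltnW.
set k0 : 'I_(2 ^ l) := Ordinal k0l.
have S_sub (i : 'I_N) : inS i -> inH l k0 i.
  by move=> iS; rewrite (inH_coarsen k0 _ iS) // (ltnW llq) lqL.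
rewrite (bigD1 k0) //= -[X in X <= _]addr0 lerD //; last first.
  apply: sumr_ge0 => m _.
  by apply: gain_ge0; rewrite ?cell_ge0 ?cells_bin_gt0 ?cells_outside_gt0.
have c0 : cell (predC (inH l k0)) inS = 0.
  by apply: big_pred0 => i /=; case iS: (inS i); rewrite ?andbF ?S_sub.
have a_s : cell (inH l k0) inS = piH pi lq mq.
  by apply: eq_bigl => i; case iS: (inS i); rewrite ?andbF ?S_sub.
have := cells_total k0; have := cells_outside_gt0 k0; rewrite c0 a_s addr0 add0r => d0 total.
apply: le_trans (gain_ge_inside q_pos qq0 q01 _ (cell_ge0 _ _) d0 _); last 2 first.
- lra.
- exact: total.
have s01 : 0 <= piH pi lq mq <= 1.
  by have := cell_ge0 (inH l k0) (predC inS); have := cell_ge0 (predC (inH l k0)) (predC inS);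
     move=> *; apply/andP; split; lra.
apply: kl_bern_farther_l; first exact: bsc_out_in01 hq0 s01.
  by case/andP: hq0 => ? ?; apply/andP; split; lra.
by left; rewrite -{1}(bsc_out0 q0) !bsc_out_homo //; lra.
Qed.

End Drift.

Theorem lemma8 (R : realType) (L : nat) (p : R -> R)
  (hp_range : forall x : R, 0 < x < 1 -> 0 < p x < 1 / 2)
  (hp_mono : forall x y : R, 0 < x -> x <= y -> y < 1 -> p x <= p y)
  (hp_cont : forall x : R, 0 < x < 1 -> (p @ x --> p x))
  (l : nat) (hl : (1 <= l < L)%N)
  (t : nat) (ht : (0 < t)%N) (pi : 'I_(2 ^ L) -> R)
  (hreach : @reach R L p t pi)
  (lq mq : nat) (hq : @hiePM_choice R L pi lq mq) :
  @expected_next R L p l pi lq mq - @Unest R L l pi >= K_h p.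
Proof.
have L1 : (1 <= L)%N by case/andP: hl => l1 /ltnW; apply: leq_trans.
have l_range : (1 <= l <= L)%N by case/andP: hl => -> /ltnW.
have post := reach_posterior p hp_range hp_mono L1 hreach.
have [lq_range mql s13 s23] := hiePM_query_balanced L1 post hq.
have [q_range q_le] := noise_bounds p hp_range hp_mono lq_range.
have /andP[q_pos _] := q_range.
have /andP[p_pos p_half] : 0 < p (1 / 2) < 1 / 2.
  by apply: hp_range; apply/andP; split; lra.
rewrite (drift_eq_sum_gain p pi l lq mq post l_range q_range) /K_h ge_min.
have [coarse|fine] := leqP lq l.
  apply/orP; left; apply: sum_gain_coarse_ge; rewrite ?s13 ?s23 //.
  exact: leq_ltn_trans coarse (proj2 (andP hl)).
have fine_range : (l < lq <= L)%N by rewrite fine; case/andP: lq_range.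
apply/orP; right.
apply: le_trans (sum_gain_fine_ge p pi l lq mq post l_range (p (1 / 2))
  fine_range mql q_pos q_le p_half s13).
have -> : 1 / 3 * (1 - p (1 / 2)) + 2 / 3 * p (1 / 2) = bsc_out (p (1 / 2)) (1 / 3).
  by rewrite /bsc_out; field.
suff : 0 <= kl_bern (bsc_out (p (1 / 2)) (1 / 3)) (p (1 / 2)) by lra.
by apply: kl_bern_ge0; rewrite ?bsc_out_in01 ?p_pos ?p_half //; apply/andP; split; lra.
Qed.
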